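(* Let $(\Phi,D)$ and $(\Psi,E)$ be domain-free s-continuous information algebras. Then $([\Phi\rightarrow\Psi]_c,D\times E)$, with pointwise combination $(f\otimes g)(\phi)=f(\phi)\otimes g(\phi)$ and focusing $f^{\Rightarrow(x,y)}(\phi)=(f(\phi^{\Rightarrow x}))^{\Rightarrow y}$, is a domain-free s-continuous information algebra.
   Context: A domain-free information algebra $(\Phi,D)$ consists of a set $\Phi$, a lattice $D$, a combination $\otimes$ and a focusing $(\psi,x)\mapsto\psi^{\Rightarrow x}$ ($x\in D$) such that: $\otimes$ is associative, commutative with neutral element $e$; $(\psi^{\Rightarrow y})^{\Rightarrow x}=\psi^{\Rightarrow x\wedge y}$; $(\phi^{\Rightarrow x}\otimes\psi)^{\Rightarrow x}=\phi^{\Rightarrow x}\otimes\psi^{\Rightarrow x}$; every $\psi$ has some $x$ with $\psi^{\Rightarrow x}=\psi$; $\psi\otimes\psi^{\Rightarrow x}=\psi$. Order: $\psi\le\phi$ iff $\psi\otimes\phi=\phi$; suprema refer to this order. $a\ll b$ means: for every directed $X$ with $b\le\vee X$ there is $c\in X$ with $a\le c$. $(\Phi,D)$, with $D$ having a top element, is continuous (resp. s-continuous) if there exists $\Gamma\subseteq\Phi$, closed under combination and containing $e$, such that every directed subset of $\Gamma$ has a supremum in $\Phi$ and $\phi=\vee\{\psi\in\Gamma:\psi\ll\phi\}$ for all $\phi$ (resp. $\phi^{\Rightarrow x}=\vee\{\psi\in\Gamma:\psi=\psi^{\Rightarrow x}\ll\phi\}$ for all $\phi,x$). $[\Phi\rightarrow\Psi]_c$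 denotes the set of maps $f:\Phi\to\Psi$ with $f(\vee X)=\vee f(X)$ for every directed $X\subseteq\Phi$; $D\times E$ is the product lattice. *)

From HB Require Import structures.
From mathcomp Require Import all_boot all_order.
Set Implicit Arguments. Unset Strict Implicit. Unset Printing Implicit Defensive.
Import Order.TTheory.
Local Open Scope order_scope.

Section InfoAlg.
Variable Phi : Type.
Variable comb : Phi -> Phi -> Phi.

Definition ia_le (psi phi : Phi) : Prop := comb psi phi = phi.

Definition is_upper (X : Phi -> Prop) (s : Phi) : Prop :=
  forall a, X a -> ia_le a s.

Definition is_sup (X : Phi -> Prop) (s : Phi) : Prop :=
  is_upper X s /\ forall u, is_upper X u -> ia_le s u.

Definition directed (X : Phi -> Prop) : Prop :=
  (exists a, X a) /\
  forall a b, X a -> X b -> exists c, X c /\ ia_le a c /\ ia_le b c.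

Definition way_below (a b : Phi) : Prop :=
  forall X s, directed X -> is_sup X s -> ia_le b s ->
  exists c, X c /\ ia_le a c.
End InfoAlg.

Record is_info_alg (Phi : Type) (d : Order.disp_t) (D : latticeType d)
    (comb : Phi -> Phi -> Phi) (e : Phi) (foc : Phi -> D -> Phi) : Prop := {
  ia_assoc : forall a b c, comb a (comb b c) = comb (comb a b) c;
  ia_comm : forall a b, comb a b = comb b a;
  ia_neutral : forall a, comb e a = a;
  ia_foc_trans : forall psi x y, foc (foc psi y) x = foc psi (x `&` y);
  ia_foc_comb : forall phi psi x,
      foc (comb (foc phi x) psi) x = comb (foc phi x) (foc psi x);
  ia_support : forall psi, exists x, foc psi x = psi;
  ia_idem : forall psi x, comb psi (foc psi x) = psi }.

Definition s_continuous (Phi : Type) (d : Order.disp_t) (D : tLatticeType d)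
    (comb : Phi -> Phi -> Phi) (e : Phi) (foc : Phi -> D -> Phi) : Prop :=
  exists Gamma : Phi -> Prop,
    (forall a b, Gamma a -> Gamma b -> Gamma (comb a b)) /\ Gamma e /\
    (forall X : Phi -> Prop, (forall a, X a -> Gamma a) -> directed comb X ->
        exists s, is_sup comb X s) /\
    (forall phi x, is_sup comb
        (fun psi => Gamma psi /\ psi = foc psi x /\ way_below comb psi phi)
        (foc phi x)).

Definition s_cont_info_alg (Phi : Type) (d : Order.disp_t) (D : tLatticeType d)
    (comb : Phi -> Phi -> Phi) (e : Phi) (foc : Phi -> D -> Phi) : Prop :=
  is_info_alg comb e foc /\ s_continuous comb e foc.

Definition dir_continuous (Phi Psi : Type) (combP : Phi -> Phi -> Phi)
    (combQ : Psi -> Psi -> Psi) (f : Phi -> Psi) : Prop :=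
  forall (X : Phi -> Prop) s, directed combP X -> is_sup combP X s ->
    is_sup combQ (fun b => exists a, X a /\ b = f a) (f s).

Definition cont_maps (Phi Psi : Type) (combP : Phi -> Phi -> Phi)
    (combQ : Psi -> Psi -> Psi) : Type :=
  {f : Phi -> Psi | dir_continuous combP combQ f}.

From HB Require Import structures.
From mathcomp Require Import all_boot all_order.
From Stdlib Require Import ClassicalDescription ProofIrrelevance.
From Stdlib Require Import FunctionalExtensionality IndefiniteDescription.
Local Open Scope order_scope.
Import Order.TTheory.
Set Implicit Arguments. Unset Strict Implicit.

(* Continuous maps are ordered pointwise and directed suprema are computed
   pointwise, so the function space inherits directed completeness.  For the
   approximation property, f^{=>(x,y)}(p) is the supremum of the
   y-focused b << f(p^{=>x}); by continuity of f each such b is already way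
   below some f(a) with a << p^{=>x}, and then the step function
   "b if a << q^{=>x}, e otherwise" is an (x,y)-focused continuous map way
   below f that takes the value b at p. *)

Local Notation "a ⊑[ c ] b" := (ia_le c a b) (at level 70).
Local Notation "a ≪[ c ] b" := (way_below c a b) (at level 70).

Definition fimage (U T : Type) (f : U -> T) (X : U -> Prop) : T -> Prop :=
  fun b => exists a, X a /\ b = f a.

Definition ia_monotone (U T : Type) (combU : U -> U -> U) (comb : T -> T -> T)
    (f : U -> T) : Prop :=
  forall a b, a ⊑[combU] b -> f a ⊑[comb] f b.

Lemma directed_image (U T : Type) (combU : U -> U -> U) (comb : T -> T -> T)
    (f : U -> T) (X : U -> Prop) :
  ia_monotone combU comb f -> directed combU X -> directed comb (fimage f X).
Proof.
move=> mf [[a Xa] dX]; split; first by exists (f a), a.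
move=> _ _ [a1 [X1 ->]] [a2 [X2 ->]].
have [c [Xc [h1 h2]]] := dX a1 a2 X1 X2.
by exists (f c); split; [exists c | split; apply: mf].
Qed.

Lemma is_sup_ext (T : Type) (comb : T -> T -> T) (X Y : T -> Prop) s :
  (forall a, X a <-> Y a) -> is_sup comb X s -> is_sup comb Y s.
Proof.
move=> XY [ub lub]; split=> [a /XY | u hu]; first exact: ub.
by apply: lub => a /XY; apply: hu.
Qed.

Section InfoOrder.
Context {T : Type} {d : Order.disp_t} {D : latticeType d}.
Context {comb : T -> T -> T} {e : T} {foc : T -> D -> T}.
Hypothesis H : is_info_alg comb e foc.

Lemma combxx a : comb a a = a.
Proof. by case: (ia_support H a) => x hx; rewrite -{2}hx (ia_idem H). Qed.

Lemma ia_lexx a : a ⊑[comb] a.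
Proof. exact: combxx. Qed.

Lemma ia_le_trans a b c : a ⊑[comb] b -> b ⊑[comb] c -> a ⊑[comb] c.
Proof. by rewrite /ia_le => hab hbc; rewrite -hbc (ia_assoc H) hab. Qed.

Lemma ia_le_anti a b : a ⊑[comb] b -> b ⊑[comb] a -> a = b.
Proof. by rewrite /ia_le => hab hba; rewrite -hab (ia_comm H) hba. Qed.

Lemma ia_le_combl a b : a ⊑[comb] comb a b.
Proof. by rewrite /ia_le (ia_assoc H) combxx. Qed.

Lemma ia_le_combr a b : b ⊑[comb] comb a b.
Proof. by rewrite (ia_comm H); apply: ia_le_combl. Qed.

Lemma ia_comb_le a b u : a ⊑[comb] u -> b ⊑[comb] u -> comb a b ⊑[comb] u.
Proof. by rewrite /ia_le => hau hbu; rewrite -(ia_assoc H) hbu hau. Qed.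

Lemma ia_e_le a : e ⊑[comb] a.
Proof. exact: (ia_neutral H a). Qed.

Lemma foc_le a x : foc a x ⊑[comb] a.
Proof. by rewrite /ia_le (ia_comm H) (ia_idem H). Qed.

Lemma foc_le_foc x a b : a ⊑[comb] b -> foc a x ⊑[comb] foc b x.
Proof.
move=> hab; have hb : comb (foc a x) b = b.
  by rewrite -{1}hab (ia_assoc H) foc_le.
by rewrite /ia_le -(ia_foc_comb H) hb.
Qed.

Lemma foc_idem a x : foc (foc a x) x = foc a x.
Proof. by rewrite (ia_foc_trans H) meetxx. Qed.

Lemma foc_e x : foc e x = e.
Proof. by apply: ia_le_anti; [apply: foc_le | apply: ia_e_le]. Qed.

Lemma is_sup_unique X s t : is_sup comb X s -> is_sup comb X t -> s = t.
Proof. by move=> [us ls] [ut lt]; apply: ia_le_anti; [apply: ls | apply: lt]. Qed.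

Lemma directed_pair a b : a ⊑[comb] b -> directed comb (fun c => c = a \/ c = b).
Proof.
move=> hab; split=> [|c1 c2 h1 h2]; first by exists a; left.
exists b; split; first by right.
by case: h1 => ->; case: h2 => ->; split; first [exact: hab | exact: ia_lexx].
Qed.

Lemma is_sup_pair a b : a ⊑[comb] b -> is_sup comb (fun c => c = a \/ c = b) b.
Proof.
move=> hab; split=> [c [] hc | u hu]; rewrite ?hc //; first exact: ia_lexx.
by apply: hu; right.
Qed.

Lemma way_below_le a b : a ≪[comb] b -> a ⊑[comb] b.
Proof.
move=> wab; have hbb := ia_lexx b.
by have [c [[->|->] hac]] := wab _ b (directed_pair hbb) (is_sup_pair hbb) hbb.
Qed.

Lemma way_below_mono a' a b b' :
  a' ⊑[comb] a -> a ≪[comb] b -> b ⊑[comb] b' -> a' ≪[comb] b'.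
Proof.
move=> ha wab hb X s dX sX hbs.
have [c [Xc hac]] := wab X s dX sX (ia_le_trans hb hbs).
by exists c; split; last exact: ia_le_trans ha hac.
Qed.

Lemma way_below_e b : e ≪[comb] b.
Proof. by move=> X s [[c Xc] _] _ _; exists c; split; last exact: ia_e_le. Qed.

Lemma way_below_comb a b c : a ≪[comb] c -> b ≪[comb] c -> comb a b ≪[comb] c.
Proof.
move=> wa wb X s dX sX hcs.
have [c1 [X1 h1]] := wa X s dX sX hcs.
have [c2 [X2 h2]] := wb X s dX sX hcs.
have [c3 [X3 [h13 h23]]] := proj2 dX c1 c2 X1 X2.
exists c3; split=> //.
by apply: ia_comb_le; [apply: ia_le_trans h1 h13 | apply: ia_le_trans h2 h23].
Qed.

Lemma dir_continuous_mono U (combU : U -> U -> U) (f : T -> U) :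
  dir_continuous comb combU f -> ia_monotone comb combU f.
Proof.
move=> cf a b hab; apply: (proj1 (cf _ _ (directed_pair hab) (is_sup_pair hab))).
by exists a; split; first left.
Qed.

Lemma dir_continuous_comp U V (combU : U -> U -> U) (combV : V -> V -> V)
    (f : T -> U) (g : U -> V) :
  dir_continuous comb combU f -> dir_continuous combU combV g ->
  dir_continuous comb combV (fun x => g (f x)).
Proof.
move=> cf cg X s dX sX.
have dY := directed_image (dir_continuous_mono cf) dX.
apply: is_sup_ext (cg _ _ dY (cf X s dX sX)) => v; split.
  by move=> [_ [[a [Xa ->]] ->]]; exists a.
by move=> [a [Xa ->]]; exists (f a); split=> //; exists a.
Qed.

Lemma dir_continuous_comb S (combS : S -> S -> S) (f g : S -> T) :
  dir_continuous combS comb f -> dir_continuous combS comb g ->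
  dir_continuous combS comb (fun x => comb (f x) (g x)).
Proof.
move=> cf cg X s dX sX.
have [uf lf] := cf X s dX sX; have [ug lg] := cg X s dX sX.
split=> [_ [a [Xa ->]] | u hu].
  apply: ia_comb_le.
    by apply: ia_le_trans (ia_le_combl (f s) (g s)); apply: uf; exists a.
  by apply: ia_le_trans (ia_le_combr (f s) (g s)); apply: ug; exists a.
apply: ia_comb_le; [apply: lf | apply: lg] => _ [a [Xa ->]];
  [apply: ia_le_trans (ia_le_combl _ (g a)) _ | apply: ia_le_trans (ia_le_combr (f a) _) _];
  by apply: hu; exists a.
Qed.

Lemma dir_continuous_const S (combS : S -> S -> S) :
  dir_continuous combS comb (fun _ : S => e).
Proof. by move=> X s _ _; split=> [_ [a [_ ->]] | u _]; [apply: ia_lexx | apply: ia_e_le]. Qed.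

End InfoOrder.

Definition step_fun (T U : Type) (d : Order.disp_t) (D : latticeType d)
    (comb : T -> T -> T) (foc : T -> D -> T) (eU : U) (a : T) (b : U) (x : D) (p : T) : U :=
  if excluded_middle_informative (a ≪[comb] foc p x) then b else eU.

Section SContinuous.
Context {T : Type} {d : Order.disp_t} {D : tLatticeType d}.
Context {comb : T -> T -> T} {e : T} {foc : T -> D -> T}.
Hypotheses (H : is_info_alg comb e foc) (HS : s_continuous comb e foc).

Lemma foc_top a : foc a \top = a.
Proof. by case: (ia_support H a) => x <-; rewrite (ia_foc_trans H) meet1x. Qed.

(* The elements of the basis that are way below some member of Z form a
   directed set with the same supremum as Z. *)
Lemma directed_approx Z : directed comb Z ->
  exists Y t, [/\ directed comb Y, is_sup comb Y t, is_sup comb Z t &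
                  forall p, Y p -> exists z, Z z /\ p ≪[comb] z].
Proof.
move=> dZ; case: HS => G [Gcomb [Ge [Gsup Gapprox]]].
pose Y p := G p /\ exists z, Z z /\ p ≪[comb] z.
have dY : directed comb Y.
  case: dZ => [[z Zz] dZ]; split.
    by exists e; split=> //; exists z; split=> //; exact: (way_below_e H).
  move=> p1 p2 [Gp1 [z1 [Z1 w1]]] [Gp2 [z2 [Z2 w2]]].
  have [z3 [Z3 [h1 h2]]] := dZ z1 z2 Z1 Z2.
  exists (comb p1 p2); split; [split | split; [exact: (ia_le_combl H) | exact: (ia_le_combr H)]].
    exact: Gcomb.
  exists z3; split=> //; apply: (way_below_comb H _ _).
    exact: (way_below_mono H (ia_lexx H p1) w1 h1).
  exact: (way_below_mono H (ia_lexx H p2) w2 h2).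
have [t sY] := Gsup Y (fun a h => proj1 h) dY.
exists Y, t; split=> //; last by move=> p [].
split=> [z Zz | u hu].
  have [_ lz] := Gapprox z \top; rewrite foc_top in lz.
  by apply: lz => a [Ga [_ w]]; apply: (proj1 sY); split=> //; exists z.
apply: (proj2 sY) => p [_ [z [Zz w]]].
exact: (ia_le_trans H (way_below_le H w) (hu z Zz)).
Qed.

Lemma directed_sup Z : directed comb Z -> exists t, is_sup comb Z t.
Proof. by move=> /directed_approx [Y [t [_ _ sZ _]]]; exists t. Qed.

Lemma way_below_directed_sup Z s b :
  directed comb Z -> is_sup comb Z s -> b ≪[comb] s -> exists z, Z z /\ b ≪[comb] z.
Proof.
move=> dZ sZ wb; have [Y [t [dY sY sZ' hY]]] := directed_approx dZ.
rewrite -(is_sup_unique H sZ sZ') in sY.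
have [p [Yp hbp]] := wb Y s dY sY (ia_lexx H s).
have [z [Zz wpz]] := hY p Yp.
by exists z; split; last exact: (way_below_mono H hbp wpz (ia_lexx H z)).
Qed.

Lemma directed_way_below_approx phi :
  exists A, [/\ directed comb A, is_sup comb A phi & forall a, A a -> a ≪[comb] phi].
Proof.
case: HS => G [Gcomb [Ge [_ Gapprox]]].
exists (fun a => G a /\ a = foc a \top /\ a ≪[comb] phi); split.
- split; first by exists e; rewrite foc_top; do 2 split=> //; exact: (way_below_e H).
  move=> a b [Ga [_ wa]] [Gb [_ wb]]; exists (comb a b); rewrite foc_top.
  split; first by split; [exact: Gcomb | split=> //; exact: (way_below_comb H)].
  by split; [apply: (ia_le_combl H) | apply: (ia_le_combr H)].
- by have := Gapprox phi \top; rewrite foc_top.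
- by move=> a [_ []].
Qed.

Lemma dir_continuous_foc x : dir_continuous comb comb (fun p => foc p x).
Proof.
move=> X s dX sX; split=> [_ [a [Xa ->]] | u hu].
  by apply: (foc_le_foc H _ _); apply: (proj1 sX).
case: HS => G [_ [_ [_ Gapprox]]]; apply: (proj2 (Gapprox s x)) => p [_ [px w]].
have [c [Xc hc]] := w X s dX sX (ia_lexx H s).
by rewrite px; apply: (ia_le_trans H (foc_le_foc H x hc) _); apply: hu; exists c.
Qed.

Section StepFunction.
Context {U : Type} {dU : Order.disp_t} {DU : latticeType dU}.
Context {combU : U -> U -> U} {eU : U} {focU : U -> DU -> U}.
Hypothesis HU : is_info_alg combU eU focU.

Lemma step_fun_in a b x p : a ≪[comb] foc p x -> step_fun comb foc eU a b x p = b.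
Proof. by rewrite /step_fun; case: excluded_middle_informative. Qed.

Lemma step_fun_out a b x p : ~ a ≪[comb] foc p x -> step_fun comb foc eU a b x p = eU.
Proof. by rewrite /step_fun; case: excluded_middle_informative. Qed.

Lemma step_fun_foc a b x p :
  step_fun comb foc eU a b x (foc p x) = step_fun comb foc eU a b x p.
Proof. by rewrite /step_fun (foc_idem H). Qed.

Lemma step_fun_le a b x p : step_fun comb foc eU a b x p ⊑[combU] b.
Proof.
case: (classic (a ≪[comb] foc p x)) => [/step_fun_in | /step_fun_out] ->.
  exact: (ia_lexx HU).
exact: (ia_e_le HU).
Qed.

Lemma dir_continuous_step_fun a b x :
  dir_continuous comb combU (step_fun comb foc eU a b x).
Proof.
move=> X s dX sX; have sY := dir_continuous_foc x dX sX.
have dY := directed_image (dir_continuous_mono H (dir_continuous_foc x)) dX.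
case: (classic (a ≪[comb] foc s x)) => [w | nw].
  have [_ [[c [Xc ->]] wc]] := way_below_directed_sup dY sY w.
  rewrite step_fun_in //; split=> [_ [c' [_ ->]] | u hu]; first exact: step_fun_le.
  by rewrite -(step_fun_in b wc); apply: hu; exists c.
rewrite step_fun_out //; split=> [_ [c [Xc ->]] | u _]; last exact: (ia_e_le HU).
rewrite step_fun_out; first exact: (ia_lexx HU).
move=> wc; apply: nw; apply: (way_below_mono H (ia_lexx H a) wc _).
by apply: (foc_le_foc H _ _); apply: (proj1 sX).
Qed.

End StepFunction.

End SContinuous.

Section ContinuousMaps.
Context {Phi : Type} {d : Order.disp_t} {D : tLatticeType d}.
Context {combP : Phi -> Phi -> Phi} {eP : Phi} {focP : Phi -> D -> Phi}.
Context {Psi : Type} {d' : Order.disp_t} {E : tLatticeType d'}.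
Context {combQ : Psi -> Psi -> Psi} {eQ : Psi} {focQ : Psi -> E -> Psi}.
Hypotheses (HP : is_info_alg combP eP focP) (SP : s_continuous combP eP focP).
Hypotheses (HQ : is_info_alg combQ eQ focQ) (SQ : s_continuous combQ eQ focQ).

Local Notation F := (cont_maps combP combQ).

Lemma cont_map_ext (f g : F) : (forall p, sval f p = sval g p) -> f = g.
Proof.
case: f g => [f cf] [g cg] /= /functional_extensionality fg.
by subst g; rewrite (proof_irrelevance _ cf cg).
Qed.

Definition cont_comb (f g : F) : F :=
  exist _ (fun p => combQ (sval f p) (sval g p))
    (dir_continuous_comb HQ (svalP f) (svalP g)).

Definition cont_e : F := exist _ (fun _ => eQ) (dir_continuous_const HQ (combS := combP)).

Definition cont_foc (f : F) (xy : (D *p E)%type) : F :=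
  exist _ (fun p => focQ (sval f (focP p xy.1)) xy.2)
    (dir_continuous_comp HP (dir_continuous_foc HP SP xy.1)
       (dir_continuous_comp HP (svalP f) (dir_continuous_foc HQ SQ xy.2))).

Lemma cont_info_alg : is_info_alg cont_comb cont_e cont_foc.
Proof.
split.
- by move=> f g h; apply: cont_map_ext => p /=; rewrite (ia_assoc HQ).
- by move=> f g; apply: cont_map_ext => p /=; rewrite (ia_comm HQ).
- by move=> f; apply: cont_map_ext => p /=; rewrite (ia_neutral HQ).
- move=> f [x1 y1] [x2 y2]; apply: cont_map_ext => p /=.
  by rewrite (ia_foc_trans HP) (ia_foc_trans HQ) (meetC x2 x1).
- move=> f g [x y]; apply: cont_map_ext => p /=.
  by rewrite (foc_idem HP) (ia_foc_comb HQ).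
- move=> f; exists (\top, \top); apply: cont_map_ext => p /=.
  by rewrite (foc_top HP) (foc_top HQ).
- move=> f [x y]; apply: cont_map_ext => p /=; rewrite (ia_comm HQ).
  apply: (ia_le_trans HQ (foc_le HQ _ y) _).
  exact: (dir_continuous_mono HP (svalP f) (foc_le HP p x)).
Qed.

Lemma cont_leP (f g : F) :
  f ⊑[cont_comb] g <-> forall p, sval f p ⊑[combQ] sval g p.
Proof.
split=> [fg p | fg]; last by apply: cont_map_ext => p; apply: fg.
exact: (congr1 (fun k : F => sval k p) fg).
Qed.

Lemma cont_directed_eval (X : F -> Prop) p :
  directed cont_comb X -> directed combQ (fimage (fun g : F => sval g p) X).
Proof. by apply: directed_image => f g /cont_leP; apply. Qed.

Lemma dir_continuous_pointwise_sup (X : F -> Prop) (h : Phi -> Psi) :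
  (forall p, is_sup combQ (fimage (fun g : F => sval g p) X) (h p)) ->
  dir_continuous combP combQ h.
Proof.
move=> sh A s dA sA; split=> [_ [a [Aa ->]] | u hu].
  apply: (proj2 (sh a)) => _ [g [Xg ->]].
  apply: (ia_le_trans HQ (dir_continuous_mono HP (svalP g) (proj1 sA a Aa)) _).
  by apply: (proj1 (sh s)); exists g.
apply: (proj2 (sh s)) => _ [g [Xg ->]].
apply: (proj2 (svalP g A s dA sA)) => _ [a [Aa ->]].
by apply: (ia_le_trans HQ (proj1 (sh a) _ _) (hu _ _)); [exists g | exists a].
Qed.

Lemma cont_directed_sup (X : F -> Prop) : directed cont_comb X ->
  exists S, is_sup cont_comb X S /\
            forall p, is_sup combQ (fimage (fun g : F => sval g p) X) (sval S p).
Proof.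
move=> dX.
have /(_ _) /constructive_indefinite_description sup_eval p :=
  directed_sup HQ SQ (cont_directed_eval p dX).
pose h p := proj1_sig (sup_eval p).
have sh p : is_sup combQ (fimage (fun g : F => sval g p) X) (h p) := proj2_sig (sup_eval p).
exists (exist _ h (dir_continuous_pointwise_sup sh)); split=> //.
split=> [g Xg | u hu]; apply/cont_leP => p /=.
  by apply: (proj1 (sh p)); exists g.
by apply: (proj2 (sh p)) => _ [g [Xg ->]]; move: (hu g Xg) => /cont_leP.
Qed.

Lemma cont_sup_eval (X : F -> Prop) S p :
  directed cont_comb X -> is_sup cont_comb X S ->
  is_sup combQ (fimage (fun g : F => sval g p) X) (sval S p).
Proof.
move=> dX sS; have [S' [sS' hS']] := cont_directed_sup dX.
by rewrite (is_sup_unique cont_info_alg sS sS'); apply: hS'.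
Qed.

Definition cont_step (a : Phi) (b : Psi) (x : D) : F :=
  exist _ (step_fun combP focP eQ a b x) (dir_continuous_step_fun HP SP HQ a b x).

Lemma cont_step_way_below a b x (f : F) :
  b ≪[combQ] sval f a -> cont_step a b x ≪[cont_comb] f.
Proof.
move=> wb X S dX sX /cont_leP fS.
have [_ [[g [Xg ->]] hb]] := wb _ _ (cont_directed_eval a dX) (cont_sup_eval a dX sX) (fS a).
exists g; split=> //; apply/cont_leP => p /=.
case: (classic (a ≪[combP] focP p x)) => wa; last by rewrite step_fun_out //; apply: (ia_e_le HQ).
rewrite step_fun_in //; apply: (ia_le_trans HQ hb _).
exact: (dir_continuous_mono HP (svalP g) (ia_le_trans HP (way_below_le HP wa) (foc_le HP p x))).
Qed.

Lemma cont_step_foc a b x y : b = focQ b y -> cont_foc (cont_step a b x) (x, y) = cont_step a b x.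
Proof.
move=> bfix; apply: cont_map_ext => p /=; rewrite (step_fun_foc HP).
case: (classic (a ≪[combP] focP p x)) => wa.
  by rewrite step_fun_in.
by rewrite step_fun_out // (foc_e HQ).
Qed.

Lemma cont_foc_approx (f : F) xy :
  is_sup cont_comb (fun g => g = cont_foc g xy /\ g ≪[cont_comb] f) (cont_foc f xy).
Proof.
case: xy => x y; split=> [g [gfix wgf] | u hu].
  by rewrite gfix; apply: (foc_le_foc cont_info_alg (x, y) (way_below_le cont_info_alg wgf)).
apply/cont_leP => p /=; case: SQ => G [_ [_ [_ Gapprox]]].
apply: (proj2 (Gapprox (sval f (focP p x)) y)) => b [_ [bfix wb]].
have [A [dA sA wA]] := directed_way_below_approx HP SP (focP p x).
have dfA := directed_image (dir_continuous_mono HP (svalP f)) dA.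
have [_ [[a [Aa ->]] wba]] := way_below_directed_sup HQ SQ dfA (svalP f _ _ dA sA) wb.
have stepu := hu _ (conj (esym (cont_step_foc a x bfix)) (cont_step_way_below x wba)).
by rewrite -(step_fun_in (eU := eQ) b (wA a Aa)); apply: (proj1 (cont_leP _ _) stepu).
Qed.

Lemma cont_s_continuous : s_continuous cont_comb cont_e cont_foc.
Proof.
exists (fun _ => True); do 2 split=> //; split.
  by move=> X _ /cont_directed_sup [S [sS _]]; exists S.
by move=> f xy; apply: is_sup_ext (cont_foc_approx f xy) => g; split=> [|[]].
Qed.

End ContinuousMaps.

Theorem theorem3p14
  (Phi : Type) (d : Order.disp_t) (D : tLatticeType d)
  (combP : Phi -> Phi -> Phi) (eP : Phi) (focP : Phi -> D -> Phi)
  (Psi : Type) (d' : Order.disp_t) (E : tLatticeType d')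
  (combQ : Psi -> Psi -> Psi) (eQ : Psi) (focQ : Psi -> E -> Psi) :
  s_cont_info_alg combP eP focP ->
  s_cont_info_alg combQ eQ focQ ->
  exists (combF : cont_maps combP combQ -> cont_maps combP combQ -> cont_maps combP combQ)
         (eF : cont_maps combP combQ)
         (focF : cont_maps combP combQ -> (D *p E)%type -> cont_maps combP combQ),
    (forall f g phi, sval (combF f g) phi = combQ (sval f phi) (sval g phi)) /\
    (forall f (xy : (D *p E)%type) phi,
        sval (focF f xy) phi = focQ (sval f (focP phi xy.1)) xy.2) /\
    s_cont_info_alg combF eF focF.
Proof.
move=> [HP SP] [HQ SQ].
exists (cont_comb HQ), (cont_e HQ), (cont_foc HP SP HQ SQ).
do 2 split=> //.
by split; [apply: cont_info_alg | apply: cont_s_continuous].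
Qed.
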